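(* As formal power series in $y$, \[ \sum_{n\ge0}Q_n(x)y^n=\frac{2-y}{1-y-(x+1)y^2}+(1+x)y-1 . \]
   Context: For $n\ge1$ let $\Xi_n$ be the poset on $\{x_1,\dots,x_n\}$ whose cover relations are exactly: $x_2\prec x_1$, $x_3\prec x_2$, and for $3\le i\le n-1$, $x_i\prec x_{i+1}$ if $i$ is odd and $x_{i+1}\prec x_i$ if $i$ is even (so $x_1>x_2>x_3<x_4>x_5<\cdots$). A filter of a poset is an up-closed subset. The matchable Lucas cube $\Omega_n$ is the graph whose vertices are the filters of $\Xi_n$, two filters adjacent iff one is obtained from the other by deleting a single element; $\Omega_0$ is the one-vertex graph. $q_{n,k}$ denotes the number of induced subgraphs of $\Omega_n$ isomorphic to the $k$-dimensional hypercube, and $Q_n(x)=\sum_{k\ge0}q_{n,k}x^k$ is the cube polynomial of $\Omega_n$. *)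

From mathcomp Require Import all_boot all_order all_algebra.
Set Implicit Arguments. Unset Strict Implicit. Unset Printing Implicit Defensive.
Import GRing.Theory.

(* Element x_{i+1} of Xi_n is represented by i : 'I_n (0-based indices). *)

Definition xi_cover (n : nat) : rel 'I_n := fun a b =>
  [|| (a == 1 :> nat) && (b == 0 :> nat),
      (a == 2 :> nat) && (b == 1 :> nat),
      [&& 2 <= a, b == a.+1 :> nat & ~~ odd a]      (* 1-based i = a+1 odd: x_i ≺ x_{i+1} *)
    | [&& 2 <= b, a == b.+1 :> nat & odd b] ].      (* 1-based i = b+1 even: x_{i+1} ≺ x_i *)

Definition xi_le (n : nat) (a b : 'I_n) : bool := connect (@xi_cover n) a b.

Definition is_filter (n : nat) (F : {set 'I_n}) : bool :=
  [forall a, forall b, (a \in F) && xi_le a b ==> (b \in F)].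

Definition filters (n : nat) : {set {set 'I_n}} := [set F | is_filter F].

Definition omega_adj (n : nat) (F G : {set 'I_n}) : bool :=
  [exists x, (x \in F) && (G == F :\ x)] || [exists x, (x \in G) && (F == G :\ x)].

Definition cube_adj (k : nat) (u v : {set 'I_k}) : bool :=
  #|(u :\: v) :|: (v :\: u)| == 1.

Definition induces_cube (n k : nat) (S : {set {set 'I_n}}) : bool :=
  [exists f : {ffun {set 'I_k} -> {set 'I_n}},
    [&& injectiveb f, [set f u | u : {set 'I_k}] == S &
        [forall u, forall v, omega_adj (f u) (f v) == cube_adj u v]]].

Definition q (n k : nat) : nat :=
  #|[set S : {set {set 'I_n}} | (S \subset filters n) && induces_cube k S]|.

(* Cube polynomial Q_n(x) (q n k = 0 for k > n since 2^k <= #vertices <= 2^n). *)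
Definition cubeQ (n : nat) : {poly int} := (\poly_(k < n.+1) (q n k)%:R)%R.

(* Bivariate setting: outer variable y = 'X in {poly {poly int}},
   inner variable x = ('X : {poly int})%:P. *)
Local Open Scope ring_scope.
Definition xv : {poly {poly int}} := ('X : {poly int})%:P.

Definition genQ (N : nat) : {poly {poly int}} :=
  \sum_(n < N.+1) (cubeQ n)%:P * 'X^n.

(* Denominator 1 - y - (x+1) y^2 (invertible in power series: constant term 1). *)
Definition denom : {poly {poly int}} := 1 - 'X - (xv + 1) * 'X^2.

(* Numerator after multiplying the RHS by denom:
   (2 - y) + ((1+x) y - 1) * denom. *)
Definition numer : {poly {poly int}} := (2%:R - 'X) + ((1 + xv) * 'X - 1) * denom.

(* An injective map of the k-cube into the subsets of a finite set that preserves
   Hamming adjacency in both directions has the form u |-> X0 (+) g(u) with g injective: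
   each square of the cube must go to a square.  Hence the induced k-cubes of Omega_n are
   the families {F :|: B | B \subset A} with F, A disjoint, #|A| = k and every F :|: B a
   filter, and this last condition is local: for every cover a < b of Xi_n, a in F :|: A
   forces b in F.  So Q_n(x) counts the 3-colourings (in F, in A, neither) of the fence
   x_1, ..., x_n with weight x^#|A|, by a transfer matrix on the colour of the last
   element.  The covers alternate from x_3 on, so two transfer steps give
   Q_(n+2) = Q_(n+1) + (1 + x) Q_n for n >= 2; with Q_0, ..., Q_3 = 1, 2 + x, 3 + 2x,
   4 + 3x this is the stated rational generating function. *)

From mathcomp Require Import all_boot all_order all_algebra ring.
Set Implicit Arguments. Unset Strict Implicit. Unset Printing Implicit Defensive.
Import GRing.Theory.

(** * Induced hypercubes of subset graphs *)

Lemma set_ind (T : finType) (P : {set T} -> Prop) :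
  P set0 -> (forall (x : T) (X : {set T}), x \notin X -> P X -> P (x |: X)) ->
  forall X, P X.
Proof.
move=> P0 PS X; have [m] := ubnP #|X|; elim: m X => // m IHm X.
have [-> //|/set0Pn[x xX]] := eqVneq X set0.
rewrite (cardsD1 x X) xX ltnS => ltXm; rewrite -(setD1K xX).
by apply: PS; [rewrite !inE eqxx | apply: IHm].
Qed.

Section SymmetricDifference.
Variable T : finType.
Implicit Types (X Y Z : {set T}) (a b : T).

Definition symdiff X Y : {set T} := (X :\: Y) :|: (Y :\: X).

Lemma in_symdiff X Y x : (x \in symdiff X Y) = (x \in X) (+) (x \in Y).
Proof. by rewrite !inE; case: (x \in X); case: (x \in Y). Qed.

Lemma symdiffC X Y : symdiff X Y = symdiff Y X.
Proof. by apply/setP=> x; rewrite !in_symdiff addbC. Qed.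

Lemma symdiffA X Y Z : symdiff X (symdiff Y Z) = symdiff (symdiff X Y) Z.
Proof. by apply/setP=> x; rewrite !in_symdiff addbA. Qed.

Lemma symdiffAC X Y Z : symdiff (symdiff X Y) Z = symdiff (symdiff X Z) Y.
Proof. by apply/setP=> x; rewrite !in_symdiff addbAC. Qed.

Lemma symdiffKl X Y : symdiff X (symdiff X Y) = Y.
Proof. by apply/setP=> x; rewrite !in_symdiff addKb. Qed.

Lemma symdiffs0 X : symdiff X set0 = X.
Proof. by apply/setP=> x; rewrite in_symdiff inE addbF. Qed.

Lemma symdiff_eq0 X Y : (symdiff X Y == set0) = (X == Y).
Proof.
apply/idP/eqP=> [/eqP/setP XY|->].
  apply/setP=> x; move: (XY x); rewrite in_symdiff inE.
  by case: (x \in X); case: (x \in Y).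
by apply/eqP/setP=> x; rewrite in_symdiff addbb inE.
Qed.

Lemma symdiff_set1 X a : a \notin X -> symdiff X [set a] = a |: X.
Proof.
move=> aX; apply/setP=> x; rewrite in_symdiff !inE.
by case: eqP => [->|]; rewrite ?(negbTE aX) ?addbF.
Qed.

Lemma symdiff_set1D X a : a \in X -> symdiff X [set a] = X :\ a.
Proof.
move=> aX; apply/setP=> x; rewrite in_symdiff !inE.
by case: (x =P a) => [->|_]; rewrite ?aX ?addbF ?andbT.
Qed.

Lemma symdiff_setU1 X a : a \notin X -> #|symdiff X (a |: X)| = 1.
Proof. by move=> aX; rewrite -symdiff_set1 // symdiffKl cards1. Qed.

Lemma symdiff_setUl X Y Z :
  [disjoint X & Y :|: Z] -> symdiff (X :|: Y) (X :|: Z) = symdiff Y Z.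
Proof.
move=> dX; apply/setP=> x; rewrite !in_symdiff !inE.
case xX: (x \in X) => //=; move: (disjointFr dX xX).
by rewrite in_setU => /norP[/negbTE-> /negbTE->].
Qed.

Lemma symdiff_pair X a b : a != b -> X != set0 ->
  #|symdiff X [set a]| = 1 -> #|symdiff X [set b]| = 1 -> X = [set a; b].
Proof.
move=> neq_ab /set0Pn[x xX] /eqP/cards1P[p Ep] /eqP/cards1P[q Eq].
have memX c r :
    symdiff X [set c] = [set r] -> forall y, (y \in X) = (y == c) (+) (y == r).
  move=> E y; rewrite -(in_set1 y r) -E in_symdiff in_set1.
  by case: (y \in X); case: (y == c).
have aX : a \in X.
  have := memX _ _ Ep x; have := memX _ _ Ep a; rewrite eqxx xX.
  by case: eqP => // -> _; rewrite addbb.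
have qa : q = a by move: aX; rewrite (memX _ _ Eq) (negbTE neq_ab) eq_sym => /eqP.
apply/setP=> y; rewrite (memX _ _ Eq) qa !inE.
by case: (y =P a) => [->|_]; rewrite ?addbF // (negbTE neq_ab).
Qed.

End SymmetricDifference.

Lemma imset_symdiff (aT rT : finType) (g : aT -> rT) (u v : {set aT}) :
  injective g -> g @: symdiff u v = symdiff (g @: u) (g @: v).
Proof.
move=> g_inj; apply/setP=> x; rewrite in_symdiff.
case: (boolP (x \in g @: setT)) => [/imsetP[y _ ->]|xg].
  by rewrite !mem_imset // in_symdiff.
have notin_g w : x \in g @: w = false.
  by apply: contraNF xg => /imsetP[y _ ->]; rewrite imset_f ?inE.
by rewrite !notin_g.
Qed.

Definition cube_of (T : finType) (F A : {set T}) : {set {set T}} :=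
  [set F :|: B | B in powerset A].

Section CubeOf.
Variables (T : finType) (F A : {set T}).
Hypothesis dFA : [disjoint F & A].

Lemma mem_cube_of X : (X \in cube_of F A) = (X :\: A == F).
Proof.
apply/imsetP/eqP=> [[B]|<-].
  rewrite inE -setD_eq0 => /eqP BA0 ->.
  by rewrite setDUl (setDidPl dFA) BA0 setU0.
by exists (X :&: A); rewrite ?inE ?subsetIr // setUC setID.
Qed.

Lemma card_cube_of : #|cube_of F A| = 2 ^ #|A|.
Proof.
rewrite card_in_imset ?card_powerset // => B C; rewrite !inE => sBA sCA FBC.
by rewrite -(setIidPl sBA) -(setIidPl sCA) -[B :&: A]set0U -[C :&: A]set0U
  -(disjoint_setI0 dFA) -!setIUl FBC.
Qed.

Lemma cube_of_imset k (f : {set 'I_k} -> {set T}) :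
  injective f -> #|A| = k -> (forall u, f u \in cube_of F A) ->
  [set f u | u : {set 'I_k}] = cube_of F A.
Proof.
move=> f_inj cardA f_cube; apply/eqP; rewrite eqEcard card_cube_of.
rewrite card_imset // -cardsT -powersetT card_powerset cardsT card_ord cardA leqnn andbT.
by apply/subsetP=> _ /imsetP[u _ ->].
Qed.

End CubeOf.

Lemma cube_of_inj (T : finType) :
  {in [pred p : {set T} * {set T} | [disjoint p.1 & p.2]] &,
   injective (fun p => cube_of p.1 p.2)}.
Proof.
move=> [F A] [F' A']; rewrite !inE /= => dFA dFA' E.
have base (G B G' B' : {set T}) : [disjoint G & B] -> [disjoint G' & B'] ->
    cube_of G B = cube_of G' B' -> G' \subset G /\ B \subset B'.
  move=> dGB dGB' EG; have mem X : X \in cube_of G B -> X :\: B' = G'.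
    by rewrite EG mem_cube_of // => /eqP.
  have /mem GG' : G \in cube_of G B by rewrite mem_cube_of // (setDidPl dGB).
  have /mem GBG' : G :|: B \in cube_of G B.
    by rewrite mem_cube_of // setDUl setDv setU0 (setDidPl dGB).
  split; first by rewrite -GG' subsetDl.
  apply/subsetP=> x xB; apply: contraT => xB'.
  have : x \in G' by rewrite -GBG' !inE xB xB' orbT.
  by rewrite -GG' inE => /andP[_ /(disjointFr dGB)]; rewrite xB.
have [sF'F sAA'] := base _ _ _ _ dFA dFA' E.
have [sFF' sA'A] := base _ _ _ _ dFA' dFA (esym E).
by congr (_, _); apply/eqP; rewrite eqEsubset ?sFF' ?sAA'.
Qed.

Section CubeEmbedding.
Variables (T : finType) (k : nat) (f : {set 'I_k} -> {set T}).
Hypothesis f_inj : injective f.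
Hypothesis f_adj :
  forall u v, (#|symdiff (f u) (f v)| == 1) = (#|symdiff u v| == 1).
Implicit Types (u w : {set 'I_k}) (i j : 'I_k).

Section Atoms.
Variable g : 'I_k -> T.
Hypothesis f_atom : forall i, f [set i] = symdiff (f set0) [set g i].

Lemma cube_atom_inj : injective g.
Proof. by move=> i j eq_g; apply/set1_inj/f_inj; rewrite !f_atom eq_g. Qed.

Lemma embedding_setU1 u i : i \notin u -> f (i |: u) = symdiff (f u) [set g i].
Proof.
elim/set_ind: u i => [|j w jw IHw] i; first by rewrite setU0 f_atom.
rewrite in_setU1 negb_or => /andP[ij iw].
have adj_w x y : x \notin y |: w -> #|symdiff (f (y |: w)) (f (x |: (y |: w)))| = 1.
  by move=> xyw; apply/eqP; rewrite f_adj symdiff_setU1.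
(* f w, f (i |: w), f (j |: w) and f (i |: (j |: w)) form an induced square. *)
have D2 : symdiff (f w) (f (i |: (j |: w))) = [set g i; g j].
  apply: symdiff_pair.
  - by rewrite (inj_eq cube_atom_inj).
  - rewrite symdiff_eq0 (inj_eq f_inj); apply: contraNneq iw => ->.
    by rewrite setU11.
  - by rewrite symdiffAC -IHw // setUCA adj_w // in_setU1 negb_or eq_sym ij.
  - by rewrite symdiffAC -IHw // adj_w // in_setU1 negb_or ij.
have gij : g i \notin [set g j] by rewrite inE (inj_eq cube_atom_inj).
by rewrite -(symdiffKl (f w) (f _)) D2 -symdiff_set1 // symdiffA -IHw.
Qed.

Lemma embedding_imset u : f u = symdiff (f set0) (g @: u).
Proof.
elim/set_ind: u => [|j w jw IHw]; first by rewrite imset0 symdiffs0.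
rewrite embedding_setU1 // IHw -symdiffA imsetU1 symdiff_set1 //.
by rewrite (mem_imset _ _ cube_atom_inj).
Qed.

End Atoms.

Lemma cube_embeddingP :
  exists2 g : 'I_k -> T, injective g & forall u, f u = symdiff (f set0) (g @: u).
Proof.
have /fin_all_exists[g f_atom] :
    forall i, exists p, f [set i] = symdiff (f set0) [set p].
  move=> i; have /cards1P[p Ep] : #|symdiff (f set0) (f [set i])| == 1.
    by rewrite f_adj -(setU0 [set i]) symdiff_setU1 ?inE.
  by exists p; rewrite -Ep symdiffKl.
by exists g; [apply: cube_atom_inj f_atom | apply: embedding_imset].
Qed.

Lemma cube_embedding_image :
  exists2 p : {set T} * {set T}, [disjoint p.1 & p.2] && (#|p.2| == k)
    & [set f u | u : {set 'I_k}] = cube_of p.1 p.2.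
Proof.
have [g g_inj f_g] := cube_embeddingP.
pose A := g @: setT.
have cardA : #|A| = k by rewrite card_imset // cardsT card_ord.
have dFA : [disjoint f set0 :\: A & A].
  by rewrite -setI_eq0 setIDAC setDIl setDv setI0.
exists (f set0 :\: A, A); first by rewrite /= dFA cardA eqxx.
apply: cube_of_imset => // u; rewrite mem_cube_of // f_g.
apply/eqP/setP=> x; rewrite !in_setD in_symdiff.
case: (boolP (x \in A)) => [//|xA] /=.
have -> : x \in g @: u = false.
  by apply: contraNF xA => /imsetP[i _ ->]; rewrite imset_f ?inE.
by rewrite addbF.
Qed.

End CubeEmbedding.

Lemma cube_of_embedding (T : finType) (F A : {set T}) : [disjoint F & A] ->
  exists f : {set 'I_#|A|} -> {set T},
    [/\ injective f, forall u v, #|symdiff (f u) (f v)| = #|symdiff u v|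
      & [set f u | u : {set 'I_#|A|}] = cube_of F A].
Proof.
move=> dFA; pose g (i : 'I_#|A|) := enum_val i.
have g_inj : injective g := enum_val_inj.
have gA (u : {set 'I_#|A|}) : g @: u \subset A.
  by apply/subsetP=> _ /imsetP[i _ ->]; apply: enum_valP.
pose f (u : {set 'I_#|A|}) := F :|: g @: u.
have f_symdiff (u v : {set 'I_#|A|}) : symdiff (f u) (f v) = g @: symdiff u v.
  rewrite symdiff_setUl ?imset_symdiff //.
  by apply: disjointWr dFA; rewrite subUset !gA.
have f_inj : injective f.
  by move=> u v /eqP; rewrite -symdiff_eq0 f_symdiff imset_eq0 symdiff_eq0 => /eqP.
exists f; split=> // [u v|]; first by rewrite f_symdiff card_imset.
apply: cube_of_imset => // u; rewrite mem_cube_of // setDUl (setDidPl dFA).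
by move: (gA u); rewrite -setD_eq0 => /eqP->; rewrite setU0.
Qed.

Lemma omega_adjE n (X Y : {set 'I_n}) : omega_adj X Y = (#|symdiff X Y| == 1).
Proof.
have del (Z W : {set 'I_n}) x : x \in Z -> (W == Z :\ x) = (symdiff Z W == [set x]).
  move=> xZ; rewrite -symdiff_set1D // -(inj_eq (can_inj (symdiffKl Z))).
  by rewrite symdiffKl.
apply/idP/cards1P=> [/orP[]/existsP[x /andP[xZ]]|[x Ex]].
- by rewrite del // => /eqP; exists x.
- by rewrite del // symdiffC => /eqP; exists x.
have : x \in symdiff X Y by rewrite Ex set11.
rewrite in_symdiff; case: (boolP (x \in X)) => /= [xX _|_ xY]; apply/orP.
  by left; apply/existsP; exists x; rewrite xX del // Ex eqxx.
by right; apply/existsP; exists x; rewrite xY del // symdiffC Ex eqxx.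
Qed.

Lemma induces_cubeP n k (S : {set {set 'I_n}}) :
  reflect (exists2 p : {set 'I_n} * {set 'I_n},
             [disjoint p.1 & p.2] && (#|p.2| == k) & S = cube_of p.1 p.2)
          (induces_cube k S).
Proof.
apply: (iffP existsP) => [[f /and3P[/injectiveP f_inj /eqP <- /forallP f_adj]]|].
  apply: cube_embedding_image f_inj _ => u v.
  by move/forallP/(_ v)/eqP: (f_adj u); rewrite omega_adjE.
case=> -[F A] /andP[/= dFA /eqP <-] ->.
have [f [f_inj f_adj f_img]] := cube_of_embedding dFA.
exists [ffun u => f u]; apply/and3P; split.
- by apply/injectiveP=> u v; rewrite !ffunE => /f_inj.
- by rewrite -f_img; apply/eqP/eq_imset=> u; rewrite ffunE.
- by apply/forallP=> u; apply/forallP=> v; rewrite !ffunE omega_adjE f_adj.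
Qed.

(** * Filters of Xi_n *)

Section UpClosed.
Variables (T : finType) (e : rel T).
Implicit Types F A B X : {set T}.

Definition up_closed (X : {set T}) : bool :=
  [forall a, forall b, e a b ==> (a \in X) ==> (b \in X)].

Lemma up_closed_connect X :
  [forall a, forall b, (a \in X) && connect e a b ==> (b \in X)] = up_closed X.
Proof.
apply/forallP/forallP=> closedX a; apply/forallP=> b.
  apply/implyP=> eab; apply/implyP=> aX.
  by apply: (implyP (forallP (closedX a) b)); rewrite aX connect1.
apply/implyP=> /andP[aX /connectP[p e_p ->]] {b}.
elim: p a aX e_p => //= b p IHp a aX /andP[eab e_p]; apply: IHp e_p.
exact: (implyP (implyP (forallP (closedX a) b) eab)).
Qed.

Definition cube_closed (F A : {set T}) : bool :=
  [forall a, forall b, e a b ==> (a \in F :|: A) ==> (b \in F)].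

Hypothesis e_irr : irreflexive e.

Lemma cube_of_up_closedE F A :
  (cube_of F A \subset [set X | up_closed X]) = cube_closed F A.
Proof.
have cubeU B : B \subset A -> F :|: B \in cube_of F A by move=> sBA; rewrite imset_f ?inE.
apply/subsetP/forallP=> [closed a|local X /imsetP[B]].
  apply/forallP=> b; apply/implyP=> eab; apply/implyP; rewrite in_setU => /orP[aF|aA].
    have := closed _ (cubeU _ (sub0set A)); rewrite setU0 inE.
    by move=> /forallP/(_ a)/forallP/(_ b); rewrite eab aF.
  have := closed _ (cubeU [set a] _); rewrite sub1set aA inE => /(_ isT).
  move=> /forallP/(_ a)/forallP/(_ b); rewrite eab !inE eqxx orbT /=.
  by case/orP=> // /eqP ba; move: eab; rewrite ba e_irr.
rewrite inE => sBA ->; rewrite inE; apply/forallP=> a; apply/forallP=> b.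
apply/implyP=> eab; apply/implyP=> aFB.
have aFA : a \in F :|: A.
  by move: aFB; rewrite !in_setU => /orP[->|/(subsetP sBA)->]; rewrite ?orbT.
by rewrite in_setU (implyP (implyP (forallP (local a) b) eab) aFA).
Qed.

End UpClosed.

(* Index i stands for x_(i+1); the cover between x_(i+1) and x_(i+2) goes up iff
   [up_edge i]. *)
Definition up_edge (i : nat) : bool := (2 <= i) && ~~ odd i.

Definition fence_cover : rel nat :=
  fun i j => ((j == i.+1) && up_edge i) || ((i == j.+1) && ~~ up_edge j).

Lemma xi_coverE n (a b : 'I_n) : xi_cover a b = fence_cover a b.
Proof.
rewrite /xi_cover /fence_cover /up_edge.
by case: (nat_of_ord a) => [|[|[|i]]]; case: (nat_of_ord b) => [|[|[|j]]];
  rewrite //= ?negbK ?andbT ?andbF ?orbF.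
Qed.

Lemma xi_cover_irr n : irreflexive (@xi_cover n).
Proof. by move=> a; rewrite xi_coverE /fence_cover (ltn_eqF (ltnSn a)). Qed.

Lemma filtersE n : filters n = [set X | up_closed (@xi_cover n) X].
Proof. by apply/setP=> X; rewrite !inE /is_filter up_closed_connect. Qed.

Definition cube_pair n (p : {set 'I_n} * {set 'I_n}) : bool :=
  [disjoint p.1 & p.2] && cube_closed (@xi_cover n) p.1 p.2.

Lemma q_cube_pairs n k :
  q n k = #|[set p : {set 'I_n} * {set 'I_n} | cube_pair p && (#|p.2| == k)]|.
Proof.
rewrite /q -(card_in_imset (sub_in2 _ (@cube_of_inj _))); last first.
  by move=> p; rewrite !inE => /andP[/andP[]].
congr #|pred_of_set _|; apply/setP=> S; rewrite inE.
apply/andP/imsetP=> [[Sfil /induces_cubeP[p /andP[dp kp] defS]]|[p]].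
  exists p => //; rewrite inE /cube_pair dp kp andbT.
  by rewrite -(cube_of_up_closedE (@xi_cover_irr n)) -filtersE -defS.
rewrite inE => /andP[/andP[dp cp] kp] ->; split.
  by rewrite filtersE (cube_of_up_closedE (@xi_cover_irr n)).
by apply/induces_cubeP; exists p; rewrite ?dp.
Qed.

(** * Transfer along the fence *)

Section Extension.
Variable n : nat.
Implicit Types (X Y Z : {set 'I_n}) (b c : bool).

Definition extS X b : {set 'I_n.+1} :=
  [set i | if unlift ord_max i is Some j then j \in X else b].

Definition ext_pair (p : {set 'I_n} * {set 'I_n}) (s : bool * bool) :=
  (extS p.1 s.1, extS p.2 s.2).

Lemma extS_lift X b j : (lift ord_max j \in extS X b) = (j \in X).
Proof. by rewrite inE liftK. Qed.

Lemma extS_max X b : (ord_max \in extS X b) = b.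
Proof. by rewrite inE unlift_none. Qed.

Lemma extSI Y Z b c : extS Y b :&: extS Z c = extS (Y :&: Z) (b && c).
Proof. by apply/setP=> i; rewrite !inE; case: unlift => [j|]; rewrite ?inE. Qed.

Lemma extS_eq0 X b : (extS X b == set0) = (X == set0) && ~~ b.
Proof.
apply/eqP/andP=> [X0|[/eqP-> /negbTE->]].
  split; last by rewrite -(extS_max X b) X0 inE.
  by apply/eqP/setP=> j; rewrite -(extS_lift X b) X0 !inE.
by apply/setP=> i; rewrite !inE; case: unlift => [j|]; rewrite ?inE.
Qed.

Lemma disjoint_extS Y Z b c :
  [disjoint extS Y b & extS Z c] = [disjoint Y & Z] && ~~ (b && c).
Proof. by rewrite -!setI_eq0 extSI extS_eq0. Qed.

Lemma card_extS X b : #|extS X b| = #|X| + b.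
Proof.
have max_lift : ord_max \notin lift ord_max @: X.
  by apply/imsetP=> -[j _ /eqP]; rewrite eq_liftF.
have -> : extS X b = if b then ord_max |: lift ord_max @: X else lift ord_max @: X.
  apply/setP=> i; rewrite inE; case: unliftP => [j ->|->]; case: b;
  by rewrite ?in_setU1 ?lift_eqF ?(mem_imset _ _ (@lift_inj _ ord_max)) ?eqxx
       //= (negbTE max_lift).
by case: b; rewrite ?cardsU1 ?max_lift card_imset ?addn0 ?addn1 ?add1n //;
  apply: lift_inj.
Qed.

Lemma big_ext_pair R (idx : R) (op : Monoid.com_law idx)
    (F : {set 'I_n.+1} * {set 'I_n.+1} -> R) :
  \big[op/idx]_p F p =
  \big[op/idx]_(p : {set 'I_n} * {set 'I_n}) \big[op/idx]_s F (ext_pair p s).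
Proof.
rewrite pair_big (reindex (fun ps => ext_pair ps.1 ps.2)) //.
pose restr (X : {set 'I_n.+1}) := [set j | lift ord_max j \in X].
exists (fun p => ((restr p.1, restr p.2), (ord_max \in p.1, ord_max \in p.2))).
  move=> [[Y Z] [b c]] _; rewrite /= !extS_max.
  by congr (_, _, _); apply/setP=> j; rewrite inE extS_lift.
move=> [X Y] _ /=; congr (_, _); apply/setP=> i;
  by rewrite inE; case: unliftP => [j ->|->]; rewrite ?inE.
Qed.

End Extension.

Lemma xi_cover_lift n (a b : 'I_n) :
  xi_cover (lift ord_max a) (lift ord_max b) = xi_cover a b.
Proof. by rewrite !xi_coverE !lift_max. Qed.

Lemma xi_cover_lift_max n (a : 'I_n.+1) :
  xi_cover (lift ord_max a) ord_max = (a == ord_max) && up_edge n.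
Proof.
rewrite xi_coverE /fence_cover lift_max /= eqSS (ltn_eqF (leqW (ltn_ord a))) orbF.
by rewrite eq_sym -[_ == _]/(a == ord_max); case: eqP => // ->.
Qed.

Lemma xi_cover_max_lift n (a : 'I_n.+1) :
  xi_cover ord_max (lift ord_max a) = (a == ord_max) && ~~ up_edge n.
Proof.
rewrite xi_coverE /fence_cover lift_max /= eqSS (ltn_eqF (leqW (ltn_ord a))) /=.
by rewrite eq_sym -[_ == _]/(a == ord_max); case: eqP => // ->.
Qed.

(* A state records whether an element lies in F and whether it lies in A; along
   a cover, a lower element of F :|: A forces the upper one into F. *)
Definition last_state n (p : {set 'I_n.+1} * {set 'I_n.+1}) : bool * bool :=
  (ord_max \in p.1, ord_max \in p.2).

Definition edge_ok (up : bool) (s t : bool * bool) : bool :=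
  if up then (s.1 || s.2) ==> t.1 else (t.1 || t.2) ==> s.1.

Lemma last_state_ext n (p : {set 'I_n} * {set 'I_n}) s :
  last_state (ext_pair p s) = s.
Proof. by rewrite /last_state !extS_max; case: s. Qed.

Lemma cube_closed_ext n (Y Z : {set 'I_n.+1}) b c :
  cube_closed (@xi_cover n.+2) (extS Y b) (extS Z c) =
  cube_closed (@xi_cover n.+1) Y Z &&
  edge_ok (up_edge n) (ord_max \in Y, ord_max \in Z) (b, c).
Proof.
have liftU i : (lift ord_max i \in extS Y b :|: extS Z c) = (i \in Y :|: Z).
  by rewrite !in_setU !extS_lift.
have maxU : (ord_max \in extS Y b :|: extS Z c) = b || c.
  by rewrite in_setU !extS_max.
apply/idP/andP=> [closed|[closed edge]].
  have closed_at a a' := forallP (forallP closed a) a'.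
  split.
    apply/forallP=> i; apply/forallP=> j.
    have := closed_at (lift ord_max i) (lift ord_max j).
    by rewrite xi_cover_lift liftU extS_lift.
  rewrite /edge_ok; case: (boolP (up_edge n)) => up /=.
    have := closed_at (lift ord_max ord_max) ord_max.
    by rewrite xi_cover_lift_max eqxx up liftU extS_max in_setU.
  have := closed_at ord_max (lift ord_max ord_max).
  by rewrite xi_cover_max_lift eqxx up maxU extS_lift.
apply/forallP=> a; apply/forallP=> a'.
case: (unliftP ord_max a) => [i ->|->]; case: (unliftP ord_max a') => [j ->|->].
- by rewrite xi_cover_lift liftU extS_lift; apply: (forallP (forallP closed i)).
- rewrite xi_cover_lift_max liftU extS_max; case: eqP => //= ->.
  by move: edge; rewrite /edge_ok in_setU; case: up_edge.
- rewrite xi_cover_max_lift maxU extS_lift; case: eqP => //= ->.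
  by move: edge; rewrite /edge_ok; case: up_edge.
- by rewrite xi_cover_irr.
Qed.

Lemma cube_pair_ext n (p : {set 'I_n.+1} * {set 'I_n.+1}) s :
  cube_pair (ext_pair p s) =
  [&& cube_pair p, ~~ (s.1 && s.2) & edge_ok (up_edge n) (last_state p) s].
Proof.
by case: p s => [Y Z] [b c]; rewrite /cube_pair /= disjoint_extS cube_closed_ext andbACA.
Qed.

(** * The cube polynomials *)

Local Open Scope ring_scope.

Lemma set_ord0 (X : {set 'I_0}) : X = set0.
Proof. by apply/setP=> -[]. Qed.

Lemma big_pairs_ord0 R (idx : R) (op : Monoid.com_law idx)
    (F : {set 'I_0} * {set 'I_0} -> R) :
  \big[op/idx]_p F p = F (set0, set0).
Proof.
rewrite (big_pred1 (set0, set0)) // => -[X Y] /=.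
by rewrite (set_ord0 X) (set_ord0 Y) eqxx.
Qed.

Lemma sum_bool_pair (R : nmodType) (F : bool * bool -> R) :
  \sum_s F s = F (true, true) + F (true, false) + (F (false, true) + F (false, false)).
Proof.
rewrite (eq_bigr (fun s => F (s.1, s.2))) => [|[] //].
by rewrite -(pair_bigA _ (fun b c => F (b, c))) /= !big_bool.
Qed.

Lemma cubeQE n : cubeQ n = \sum_(p : {set 'I_n} * {set 'I_n} | cube_pair p) 'X^#|p.2|.
Proof.
apply/polyP=> k; rewrite coef_poly coef_sum.
under eq_bigr do rewrite coefXn.
case: ltnP => [lt_kn|lt_nk].
  rewrite q_cube_pairs -sum1dep_card natr_sum big_mkcondr.
  by apply: eq_bigr => p _; rewrite eq_sym; case: eqP.
apply/esym/big1=> p _; rewrite eqn_leq leqNgt.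
have le_pn : (#|p.2| <= n)%N by rewrite -[n in (_ <= n)%N]card_ord max_card.
by rewrite (leq_trans _ lt_nk) ?ltnS.
Qed.

Definition Qlast n (s : bool * bool) : {poly int} :=
  \sum_(p : {set 'I_n.+1} * {set 'I_n.+1} | cube_pair p && (last_state p == s))
     'X^#|p.2|.

Lemma cubeQ_Qlast n : cubeQ n.+1 = \sum_s Qlast n s.
Proof. by rewrite cubeQE (partition_big (@last_state n) predT). Qed.

Lemma Qlast_tt n : Qlast n (true, true) = 0.
Proof.
rewrite /Qlast big_pred0 // => -[F A]; apply/negP=> /andP[/andP[dFA _] /eqP[mF mA]].
by rewrite (disjointFr dFA mF) in mA.
Qed.

Lemma QlastS n t :
  Qlast n.+1 t =
  (~~ (t.1 && t.2))%:R * 'X^(t.2 : bool) *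
  \sum_s (edge_ok (up_edge n) s t)%:R * Qlast n s.
Proof.
have -> : \sum_s (edge_ok (up_edge n) s t)%:R * Qlast n s =
          \sum_(s | edge_ok (up_edge n) s t) Qlast n s.
  by rewrite [RHS]big_mkcond; apply: eq_bigr => s _; rewrite mulr_natl mulrb.
rewrite /Qlast big_mkcond big_ext_pair.
have last_t (p : {set 'I_n.+1} * {set 'I_n.+1}) :
    \sum_s (if cube_pair (ext_pair p s) && (last_state (ext_pair p s) == t)
            then 'X^#|(ext_pair p s).2| else 0) =
    (if cube_pair (ext_pair p t) then 'X^(#|p.2| + (t.2 : bool))%N else 0 : {poly int}).
  rewrite (bigD1 t) //= big1 ?addr0 => [|s /negbTE nst]; rewrite last_state_ext.
    by rewrite eqxx andbT card_extS.
  by rewrite nst andbF.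
under eq_bigr do rewrite last_t cube_pair_ext.
case: (t.1 && t.2) => /=.
  by rewrite mulr0n !mul0r big1 // => p _; rewrite andbF.
rewrite mulr1n mul1r -big_mkcond /= mulr_sumr.
rewrite (partition_big (@last_state n) (fun s => edge_ok (up_edge n) s t));
  last by move=> p /andP[].
apply: eq_bigr => s edge; rewrite mulr_sumr; apply: eq_big => [p|p _].
  by case: eqP => [->|]; rewrite ?edge ?andbT ?andbF.
by rewrite exprD mulrC.
Qed.

Lemma cubeQ0 : cubeQ 0 = 1.
Proof.
rewrite cubeQE big_mkcond big_pairs_ord0 /cube_pair /= cards0 expr0.
by rewrite -setI_eq0 setI0 eqxx; case: ifPn => //; case/forallP=> -[].
Qed.

Lemma cube_pair1 (p : {set 'I_1} * {set 'I_1}) : cube_pair p = [disjoint p.1 & p.2].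
Proof.
rewrite /cube_pair; case: [disjoint _ & _] => //=.
by apply/forallP=> a; apply/forallP=> b; rewrite (ord1 a) (ord1 b) xi_cover_irr.
Qed.

Lemma Qlast0 t : Qlast 0 t = (~~ (t.1 && t.2))%:R * 'X^(t.2 : bool).
Proof.
rewrite /Qlast big_mkcond big_ext_pair big_pairs_ord0.
rewrite (bigD1 t) //= big1 ?addr0 => [|s nst];
  rewrite last_state_ext cube_pair1 /= disjoint_extS.
  rewrite -setI_eq0 setI0 !eqxx andbT card_extS cards0.
  by case: (t.1 && t.2); rewrite ?mulr0n ?mulr1n ?mul0r ?mul1r.
by rewrite (negbTE nst) andbF.
Qed.

Lemma Qlast_up n : up_edge n ->
  [/\ Qlast n.+1 (false, false) = Qlast n (false, false),
      Qlast n.+1 (false, true) = 'X * Qlast n (false, false)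
    & Qlast n.+1 (true, false) = cubeQ n.+1].
Proof.
move=> up; rewrite !QlastS cubeQ_Qlast !sum_bool_pair Qlast_tt /edge_ok up /=.
by split; ring.
Qed.

Lemma Qlast_down n : ~~ up_edge n ->
  [/\ Qlast n.+1 (false, false) = cubeQ n.+1,
      Qlast n.+1 (false, true) = 'X * Qlast n (true, false)
    & Qlast n.+1 (true, false) = Qlast n (true, false)].
Proof.
move=> /negbTE down; rewrite !QlastS cubeQ_Qlast !sum_bool_pair Qlast_tt /edge_ok down /=.
by split; ring.
Qed.

Lemma up_edge_alternates m : up_edge m.+2 = ~~ up_edge m.+1.
Proof. by rewrite /up_edge /=; case: m => //= m; rewrite negbK. Qed.

Lemma cubeQ_rec n : (2 <= n)%N -> cubeQ n.+2 = cubeQ n.+1 + (1 + 'X) * cubeQ n.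
Proof.
case: n => [|[|m]] // _; rewrite cubeQ_Qlast sum_bool_pair Qlast_tt.
case: (boolP (up_edge m.+1)) => up1.
  have [_ _ tf2] := Qlast_up up1.
  have [-> -> ->] := Qlast_down (negbT (etrans (up_edge_alternates m) (negbF up1))).
  by rewrite tf2; ring.
have [ff2 _ _] := Qlast_down up1.
have [-> -> ->] := Qlast_up (etrans (up_edge_alternates m) up1).
by rewrite ff2; ring.
Qed.

Lemma cubeQ_initial :
  [/\ cubeQ 0 = 1, cubeQ 1 = 2%:R + 'X, cubeQ 2 = 3%:R + 2%:R * 'X
    & cubeQ 3 = 4%:R + 3%:R * 'X].
Proof.
have Q1 : cubeQ 1 = 2%:R + 'X by rewrite cubeQ_Qlast sum_bool_pair !Qlast0 /=; ring.
have [ff1 ft1 tf1] := @Qlast_down 0 isT.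
have Q2 : cubeQ 2 = 3%:R + 2%:R * 'X.
  by rewrite cubeQ_Qlast sum_bool_pair Qlast_tt ff1 ft1 tf1 Q1 Qlast0 /=; ring.
have [ff2 ft2 tf2] := @Qlast_down 1 isT.
split=> //; first exact: cubeQ0.
by rewrite cubeQ_Qlast sum_bool_pair Qlast_tt ff2 ft2 tf2 Q2 tf1 Qlast0 /=; ring.
Qed.

(** * The generating function *)

Lemma xvD1 : xv + 1 = (1 + 'X)%:P.
Proof. by rewrite rmorphD rmorph1 addrC. Qed.

Lemma coef_genQ N i : (genQ N)`_i = if (i <= N)%N then cubeQ i else 0.
Proof.
rewrite /genQ coef_sum; under eq_bigr do rewrite coefCM coefXn.
case: leqP => [le_iN|lt_Ni].
  rewrite (bigD1 (Ordinal (le_iN : (i < N.+1)%N))) //= eqxx mulr1 big1 ?addr0 // => j.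
  by rewrite -val_eqE /= eq_sym => /negbTE->; rewrite mulr0.
by apply: big1 => j _; rewrite gtn_eqF ?mulr0 // (leq_trans (ltn_ord j) lt_Ni).
Qed.

Lemma coef_mul_denom (p : {poly {poly int}}) k :
  (p * denom)`_k = p`_k - (if k is k'.+1 then p`_k' else 0)
                   - (1 + 'X) * (if k is k'.+2 then p`_k' else 0).
Proof.
rewrite /denom mulrBr mulrBr mulr1 mulrCA xvD1 !coefB coefCM coefMX coefMXn.
by case: k => [|[|k]]; rewrite /= ?subn0 ?mulr0 ?subr0 // !subSS subn0.
Qed.

Lemma numerE : numer = 1 + (1 + 'X)%:P * 'X - ((1 + 'X) ^+ 2)%:P * 'X^3.
Proof. rewrite /numer /denom -xvD1 rmorphXn /=. ring. Qed.

Lemma coef_numer k :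
  numer`_k = (k == 0)%:R + (k == 1)%:R * (1 + 'X) - (k == 3)%:R * (1 + 'X) ^+ 2.
Proof. by rewrite numerE coefB coefD coef1 !coefCM coefX coefXn; ring. Qed.

Lemma cubeQ_numer_coef k : cubeQ k.+2 - cubeQ k.+1 - (1 + 'X) * cubeQ k = numer`_k.+2.
Proof.
have [Q0 Q1 Q2 Q3] := cubeQ_initial; rewrite coef_numer.
case: k => [|[|k]] /=; first (by rewrite Q0 Q1 Q2; ring); first by rewrite Q1 Q2 Q3; ring.
by rewrite cubeQ_rec //; ring.
Qed.

Theorem mainTheorem10 :
  forall N k : nat, (k <= N)%N -> (genQ N * denom)`_k = numer`_k.
Proof.
move=> N k le_kN; have [Q0 Q1 _ _] := cubeQ_initial.
rewrite coef_mul_denom; case: k le_kN => [|[|k]] le_kN /=;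
  rewrite !coef_genQ le_kN ?(ltnW le_kN) ?(ltnW (ltnW le_kN)).
- by rewrite coef_numer Q0 /=; ring.
- by rewrite coef_numer Q0 Q1 /=; ring.
- exact: cubeQ_numer_coef.
Qed.
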